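(* Let $(M,d)$ be a metric space, $Q\ge2$ an integer, and let $\mathbf P\in\mathcal A_Q(M)$ not be of the form $Q[\![P]\!]$ for any $P\in M$. Then there exist an integer $1\le R<Q$, an open neighborhood $U$ of $\mathbf P$ in $\mathcal A_Q(M)$ and continuous maps $\pi_1\colon U\to\mathcal A_R(M)$, $\pi_2\colon U\to\mathcal A_{Q-R}(M)$ such that $\mathbf S=\pi_1(\mathbf S)+\pi_2(\mathbf S)$ for every $\mathbf S\in U$, and $$\mathcal G(\mathbf S,\mathbf T)^2=\mathcal G\big(\pi_1(\mathbf S),\pi_1(\mathbf T)\big)^2+\mathcal G\big(\pi_2(\mathbf S),\pi_2(\mathbf T)\big)^2\quad\text{for all }\mathbf S,\mathbf T\in U.$$
   Context: For a metric space $(M,d)$ and a positive integer $Q$, $\mathcal A_Q(M)$ is the set of measures on $M$ of the form $\sum_{i=1}^Q[\![P_i]\!]$ with $P_i\in M$ not necessarily distinct ($[\![P]\!]$ the Dirac mass at $P$), with the metric $\mathcal G\big(\sum_i[\![A_i]\!],\sum_i[\![B_i]\!]\big)=\min_\sigma\sqrt{\sum_{i=1}^Q d(A_i,B_{\sigma(i)})^2}$, minimum over all permutations $\sigma$ of $\{1,\dots,Q\}$; the same definition is used for $\mathcal A_R(M)$, $\mathcal A_{Q-R}(M)$, and sums are sums of measures. *)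

From mathcomp Require Import all_boot all_order all_algebra all_fingroup.
From mathcomp Require Import reals.
Set Implicit Arguments. Unset Strict Implicit. Unset Printing Implicit Defensive.
Import Order.TTheory GRing.Theory Num.Theory.
Local Open Scope ring_scope.

Definition is_metric (R : realType) (M : Type) (d : M -> M -> R) : Prop :=
  [/\ (forall x y, 0 <= d x y),
      (forall x y, d x y = 0 <-> x = y),
      (forall x y, d x y = d y x) &
      (forall x y z, d x z <= d x y + d y z)].

(* A point sum_{i<n} [[x i]] of A_n(M) is represented by x : 'I_n -> M.
   Two representatives (possibly with different index types) denote the
   same measure iff they agree up to a bijection of indices. *)
Definition eqA (M : Type) (n m : nat) (x : 'I_n -> M) (y : 'I_m -> M) : Prop :=
  exists f : 'I_n -> 'I_m, bijective f /\ forall i, y (f i) = x i.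

(* Sum of measures: concatenation of representatives. *)
Definition sumA (M : Type) (a b : nat) (x : 'I_a -> M) (y : 'I_b -> M)
  : 'I_(a + b) -> M :=
  fun i => match split i with inl j => x j | inr k => y k end.

Definition Gcost (R : realType) (M : Type) (d : M -> M -> R) (n : nat)
  (x y : 'I_n -> M) (s : 'S_n) : R :=
  Num.sqrt (\sum_(i < n) d (x i) (y (s i)) ^+ 2).

Definition G (R : realType) (M : Type) (d : M -> M -> R) (n : nat)
  (x y : 'I_n -> M) : R :=
  \big[Num.min/Gcost d x y 1%g]_(s : 'S_n) Gcost d x y s.

(* U is a set of points of A_n(M): saturated for eqA. *)
Definition saturated (M : Type) (n : nat) (U : ('I_n -> M) -> Prop) : Prop :=
  forall x y, eqA x y -> U x -> U y.

Definition openA (R : realType) (M : Type) (d : M -> M -> R) (n : nat)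
  (U : ('I_n -> M) -> Prop) : Prop :=
  forall x, U x -> exists2 e : R, 0 < e & forall y, G d x y < e -> U y.

Definition wellDefinedOn (M : Type) (n m : nat) (U : ('I_n -> M) -> Prop)
  (f : ('I_n -> M) -> ('I_m -> M)) : Prop :=
  forall x y, U x -> U y -> eqA x y -> eqA (f x) (f y).

Definition continuousOn (R : realType) (M : Type) (d : M -> M -> R) (n m : nat)
  (U : ('I_n -> M) -> Prop) (f : ('I_n -> M) -> ('I_m -> M)) : Prop :=
  forall x, U x -> forall e : R, 0 < e ->
    exists2 del : R, 0 < del &
      forall y, U y -> G d x y < del -> G d (f x) (f y) < e.

(* Let p0 be a point of P and d0 > 0 a lower bound for the nonzero distances
   from points of P to p0. Configurations that can be matched to P with every displacement
   below eps = d0 / (4 (Q + 1)) consist of r points within eps of p0 and Q - r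
   points farther than d0 - eps from it, r being the multiplicity of p0 in P;
   pi1 keeps the near points and pi2 the far ones. Between two such
   configurations G is below d0 / 2, whereas every near point is at distance
   at least d0 / 2 from every far point, so an optimal matching never pairs a
   near point with a far one and the squared cost splits into two blocks. *)

From mathcomp Require Import all_boot all_order all_algebra all_fingroup.
From mathcomp Require Import reals lra.
Import Order.TTheory GRing.Theory Num.Theory.
Local Open Scope ring_scope.
Set Implicit Arguments. Unset Strict Implicit. Unset Printing Implicit Defensive.

Lemma fin_gt0_lbound (R : realType) (T : finType) (F : T -> R) :
  exists2 e, 0 < e & forall i, 0 < F i -> e <= F i.
Proof.
exists (\big[Num.min/1]_(i | 0 < F i) F i); first exact: lt_bigmin.
by move=> i; apply: bigmin_le_cond.
Qed.

Lemma fin_metric_gap (R : realType) (M : Type) (d : M -> M -> R) n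
    (x : 'I_n -> M) (p : M) :
  is_metric d -> exists2 d0, 0 < d0 & forall i, x i = p \/ d0 <= d (x i) p.
Proof.
case=> d_ge0 d_eq0 _ _; have [d0 d0_gt0 le_d0] := fin_gt0_lbound (fun i => d (x i) p).
exists d0 => // i; have [/d_eq0 xp|] := eqVneq (d (x i) p) 0; first by left.
by rewrite neq_lt ltNge d_ge0 /= => /le_d0; right.
Qed.

Section EqA.
Variable M : Type.

Lemma eqA_ext n (x y : 'I_n -> M) : x =1 y -> eqA x y.
Proof. by move=> xy; exists id; split; [exists id | move=> i; rewrite xy]. Qed.

Lemma eqA_sym n m (x : 'I_n -> M) (y : 'I_m -> M) : eqA x y -> eqA y x.
Proof.
case=> f [[g fg gf] yf]; exists g; split; first by exists f.
by move=> j; rewrite -yf gf.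
Qed.

Lemma eqA_trans n m k (x : 'I_n -> M) (y : 'I_m -> M) (z : 'I_k -> M) :
  eqA x y -> eqA y z -> eqA x z.
Proof.
case=> f [bf yf] [g [bg zg]]; exists (g \o f); split; first exact: bij_comp.
by move=> i /=; rewrite zg yf.
Qed.

Lemma eqA_card n m (x : 'I_n -> M) (y : 'I_m -> M) : eqA x y -> n = m.
Proof. by case=> f [bf _]; have := bij_eq_card bf; rewrite !card_ord. Qed.

Lemma sumA_lshift a b (x : 'I_a -> M) (y : 'I_b -> M) i :
  sumA x y (lshift b i) = x i.
Proof. by rewrite /sumA (unsplitK (inl _ i)). Qed.

Lemma sumA_rshift a b (x : 'I_a -> M) (y : 'I_b -> M) j :
  sumA x y (rshift a j) = y j.
Proof. by rewrite /sumA (unsplitK (inr _ j)). Qed.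

End EqA.

Section MatchingCost.
Variables (R : realType) (M : Type) (d : M -> M -> R).

Definition sqcost n (x y : 'I_n -> M) (s : 'S_n) : R :=
  \sum_(i < n) d (x i) (y (s i)) ^+ 2.

Lemma sqcost_ge0 n (x y : 'I_n -> M) s : 0 <= sqcost x y s.
Proof. by apply: sumr_ge0 => i _; apply: sqr_ge0. Qed.

Lemma G_le n (x y : 'I_n -> M) s : G d x y <= Gcost d x y s.
Proof. exact: bigmin_le. Qed.

Lemma G_attained n (x y : 'I_n -> M) : exists s, G d x y = Gcost d x y s.
Proof.
rewrite /G; elim/big_ind: _ => [|u v [s ->] [t ->]|s _]; try by eexists.
by case: leP => _; eexists.
Qed.

Lemma G_ge0 n (x y : 'I_n -> M) : 0 <= G d x y.
Proof. by have [s ->] := G_attained x y; apply: sqrtr_ge0. Qed.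

Lemma Gcost_sqr n (x y : 'I_n -> M) s : Gcost d x y s ^+ 2 = sqcost x y s.
Proof. by rewrite sqr_sqrtr // sqcost_ge0. Qed.

Lemma G_sqr_attained n (x y : 'I_n -> M) : exists s, G d x y ^+ 2 = sqcost x y s.
Proof. by have [s ->] := G_attained x y; exists s; rewrite Gcost_sqr. Qed.

Lemma G_sqr_le n (x y : 'I_n -> M) s : G d x y ^+ 2 <= sqcost x y s.
Proof. by rewrite -Gcost_sqr lerXn2r ?nnegrE ?G_ge0 ?sqrtr_ge0 ?G_le. Qed.

Lemma sqcost_term_le n (x y : 'I_n -> M) (s : 'S_n) i :
  d (x i) (y (s i)) ^+ 2 <= sqcost x y s.
Proof. by rewrite /sqcost (bigD1 i) //= lerDl sumr_ge0 // => j _; apply: sqr_ge0. Qed.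

Lemma G_lt_pointwise n (x y : 'I_n -> M) e :
  (forall a b, 0 <= d a b) -> G d x y < e ->
  exists s : 'S_n, forall i, d (x i) (y (s i)) < e.
Proof.
move=> d_ge0 lt_Ge; have [s Gs] := G_sqr_attained x y; exists s => i.
have := sqcost_term_le x y s i; rewrite -Gs => le_dG.
have := G_ge0 x y; have := d_ge0 (x i) (y (s i)); nra.
Qed.

Lemma G_sqr_eqA_le n (x x' y y' : 'I_n -> M) :
  eqA x x' -> eqA y y' -> G d x' y' ^+ 2 <= G d x y ^+ 2.
Proof.
case=> f [[f' ff' f'f] x'f] [g [[g' gg' _] y'g]].
have [s ->] := G_sqr_attained x y.
have inj_gsf' : injective (g \o s \o f') :=
  inj_comp (inj_comp (can_inj gg') (@perm_inj _ s)) (can_inj f'f).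
apply: le_trans (G_sqr_le x' y' (perm inj_gsf')) _.
rewrite /sqcost (reindex_inj (can_inj ff')) /=; apply: ler_sum => i _.
by rewrite permE /= ff' x'f y'g.
Qed.

Lemma G_eqA n m (x y : 'I_n -> M) (x' y' : 'I_m -> M) :
  eqA x x' -> eqA y y' -> G d x y = G d x' y'.
Proof.
move=> xx' yy'; have nm := eqA_card xx'; subst m.
apply/eqP; rewrite -(@eqrXn2 _ 2) ?G_ge0 // eq_le !G_sqr_eqA_le //; exact: eqA_sym.
Qed.

End MatchingCost.

Section BlockPerm.
Variables a b : nat.

Definition block_perm (s : 'S_(a + b)) (s1 : 'S_a) (s2 : 'S_b) : Prop :=
  (forall i, s (lshift b i) = lshift b (s1 i)) /\
  (forall j, s (rshift a j) = rshift a (s2 j)).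

Lemma exists_block_perm (s1 : 'S_a) (s2 : 'S_b) : exists s, block_perm s s1 s2.
Proof.
pose h k := match split k with
  | inl i => lshift b (s1 i) | inr j => rshift a (s2 j) end.
have inj_h : injective h.
  move=> k1 k2; rewrite /h.
  case: split_ordP => i1 ->; case: split_ordP => i2 -> /eqP;
    by rewrite eq_shift ?(inj_eq perm_inj) // => /eqP ->.
exists (perm inj_h); split => [i|j]; rewrite permE /h.
  by rewrite (unsplitK (inl _ i)).
by rewrite (unsplitK (inr _ j)).
Qed.

Lemma block_perm_of_lshift (s : 'S_(a + b)) :
  (forall i, exists i', s (lshift b i) = lshift b i') ->
  exists s1 s2, block_perm s s1 s2.
Proof.
move=> s_left.
pose f1 i := if split (s (lshift b i)) is inl i' then i' else i.
have sf1 i : s (lshift b i) = lshift b (f1 i).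
  by rewrite /f1; have [i' ->] := s_left i; rewrite (unsplitK (inl _ i')).
have inj_f1 : injective f1.
  by move=> i1 i2 eq_f1; apply/lshift_inj/(@perm_inj _ s); rewrite !sf1 eq_f1.
pose s1 := perm inj_f1.
have s_right j : exists j', s (rshift a j) = rshift a j'.
  case: (split_ordP (s (rshift a j))) => [i si|j' sj]; last by exists j'.
  have : s (rshift a j) = s (lshift b ((s1^-1)%g i)).
    by rewrite si sf1 -[f1 _]permE permKV.
  by move/perm_inj/eqP; rewrite eq_rlshift.
pose f2 j := if split (s (rshift a j)) is inr j' then j' else j.
have sf2 j : s (rshift a j) = rshift a (f2 j).
  by rewrite /f2; have [j' ->] := s_right j; rewrite (unsplitK (inr _ j')).
have inj_f2 : injective f2.
  by move=> j1 j2 eq_f2; apply/rshift_inj/(@perm_inj _ s); rewrite !sf2 eq_f2.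
by exists s1, (perm inj_f2); split => k; rewrite permE.
Qed.
End BlockPerm.

Section GSumA.
Variables (R : realType) (M : Type) (d : M -> M -> R).
Variables (a b : nat) (x1 y1 : 'I_a -> M) (x2 y2 : 'I_b -> M).

Lemma sqcost_block_perm s s1 s2 : block_perm s s1 s2 ->
  sqcost d (sumA x1 x2) (sumA y1 y2) s = sqcost d x1 y1 s1 + sqcost d x2 y2 s2.
Proof.
case=> s_left s_right; rewrite /sqcost big_split_ord /=.
by congr (_ + _); apply: eq_bigr => i _;
  rewrite ?s_left ?s_right ?sumA_lshift ?sumA_rshift.
Qed.

Lemma G_sqr_sumA_le :
  G d (sumA x1 x2) (sumA y1 y2) ^+ 2 <= G d x1 y1 ^+ 2 + G d x2 y2 ^+ 2.
Proof.
have [[s1 ->] [s2 ->]] := (G_sqr_attained d x1 y1, G_sqr_attained d x2 y2).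
have [s bs] := exists_block_perm s1 s2.
by rewrite -(sqcost_block_perm bs) G_sqr_le.
Qed.

Lemma G_sqr_sumA K :
  G d (sumA x1 x2) (sumA y1 y2) ^+ 2 < K ->
  (forall i j, K <= d (x1 i) (y2 j) ^+ 2) ->
  G d (sumA x1 x2) (sumA y1 y2) ^+ 2 = G d x1 y1 ^+ 2 + G d x2 y2 ^+ 2.
Proof.
move=> lt_GK far12; apply/le_anti; rewrite G_sqr_sumA_le /=.
have [s Gs] := G_sqr_attained d (sumA x1 x2) (sumA y1 y2).
have s_left i : exists i', s (lshift b i) = lshift b i'.
  case: (split_ordP (s (lshift b i))) => [i' ->|j sj]; first by exists i'.
  have := sqcost_term_le d (sumA x1 x2) (sumA y1 y2) s (lshift b i).
  rewrite sj sumA_lshift sumA_rshift -Gs => le_dG.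
  by have := lt_le_trans lt_GK (far12 i j); rewrite ltNge le_dG.
have [s1 [s2 bs]] := block_perm_of_lshift s_left.
by rewrite Gs (sqcost_block_perm bs) lerD ?G_sqr_le.
Qed.

End GSumA.

(* The index i0 is only the default value of nth: restrict i0 c k x lists the
   points of x satisfying c when k is their number. *)
Definition restrict (M : Type) n (i0 : 'I_n) (c : pred M) k (x : 'I_n -> M)
  : 'I_k -> M :=
  fun i => x (nth i0 (enum [set j | c (x j)]) i).
Arguments restrict {M n} i0 c k x _.

Section Restrict.
Variables (M : Type) (n : nat) (i0 : 'I_n).

Lemma card_setC_pred (c : pred M) (x : 'I_n -> M) :
  #|[set j | ~~ c (x j)]| = (n - #|[set j | c (x j)]|)%N.
Proof.
have -> : [set j | ~~ c (x j)] = ~: [set j | c (x j)] by apply/setP => j; rewrite !inE.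
by rewrite -[n in (n - _)%N](card_ord n) -(cardsC [set j | c (x j)]) addKn.
Qed.

Lemma restrict_pred c k (x : 'I_n -> M) (i : 'I_k) :
  #|[set j | c (x j)]| = k -> c (restrict i0 c k x i).
Proof.
move=> card_c; have : nth i0 (enum [set j | c (x j)]) i \in enum [set j | c (x j)].
  by apply: mem_nth; rewrite -cardE card_c.
by rewrite mem_enum inE.
Qed.

Lemma eqA_nth_perm k k' (x : 'I_n -> M) (s t : seq 'I_n) :
  perm_eq s t -> size s = k -> size t = k' ->
  eqA (fun i : 'I_k => x (nth i0 s i)) (fun i : 'I_k' => x (nth i0 t i)).
Proof.
move=> st size_s size_t.
have k'k : k' = k by rewrite -size_t -size_s (perm_size st).
rewrite k'k in size_t; subst k'; case/(perm_iotaP i0): st => I I_iota sI.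
have size_I : size I = k by rewrite (perm_size I_iota) size_iota.
have I_lt (i : 'I_k) : (nth 0 I i < k)%N.
  have i_lt : (i < size I)%N by rewrite size_I.
  by have := mem_nth 0 i_lt; rewrite (perm_mem I_iota) mem_iota size_t.
have uniq_I : uniq I by rewrite (perm_uniq I_iota) iota_uniq.
exists (fun i => Ordinal (I_lt i)); split=> [|i]; last first.
  by rewrite /= sI (nth_map 0) // size_I.
apply: injF_bij => i j /(congr1 val) /= /eqP.
by rewrite nth_uniq ?size_I // => /eqP /val_inj.
Qed.

Lemma eqA_sumA_restrict c k (x : 'I_n -> M) : #|[set j | c (x j)]| = k ->
  eqA x (sumA (restrict i0 c k x) (restrict i0 (predC c) (n - k) x)).
Proof.
move=> card_c; set A := [set j | c (x j)]; set A' := [set j | ~~ c (x j)].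
have card_A' : #|A'| = (n - k)%N by rewrite card_setC_pred card_c.
have enum_AA' : perm_eq (enum 'I_n) (enum A ++ enum A').
  apply: uniq_perm; first exact: enum_uniq.
    rewrite cat_uniq !enum_uniq andbT /=.
    by apply/hasPn => j; rewrite !mem_enum !inE => ->.
  by move=> j; rewrite mem_cat !mem_enum !inE orbN.
apply: eqA_trans (eqA_ext (x := x) (y := fun i => x (nth i0 (enum 'I_n) i)) _) _.
  by move=> i; rewrite nth_ord_enum.
apply: eqA_trans (eqA_nth_perm (k' := (k + (n - k))%N) x enum_AA' _ _) _.
- by rewrite -cardE card_ord.
- by rewrite size_cat -!cardE card_c card_A'.
apply: eqA_ext => i; rewrite /sumA /restrict.
case: splitP => j ->; rewrite nth_cat -cardE card_c ?ltn_ord //.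
by rewrite ltnNge leq_addr /= addKn.
Qed.

Lemma eqA_restrict c k (x y : 'I_n -> M) :
  eqA x y -> #|[set j | c (x j)]| = k -> eqA (restrict i0 c k x) (restrict i0 c k y).
Proof.
move=> [f [[f' ff' f'f] yf]] card_c.
have inj_f := can_inj ff'.
have perm_f : perm_eq (map f (enum [set j | c (x j)])) (enum [set j | c (y j)]).
  apply: uniq_perm; rewrite ?enum_uniq ?(map_inj_uniq inj_f) ?enum_uniq //.
  by move=> j; rewrite -(f'f j) mem_enum (mem_map inj_f) mem_enum !inE yf.
apply: eqA_trans (eqA_nth_perm y perm_f _ _).
- by apply: eqA_ext => i; rewrite /restrict (nth_map i0) ?yf // -cardE card_c.
- by rewrite size_map -cardE.
- by rewrite -(perm_size perm_f) size_map -cardE.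
Qed.

End Restrict.

Section MatchBall.
Variables (R : realType) (M : Type) (d : M -> M -> R).
Hypothesis hd : is_metric d.

Definition match_ball n (x : 'I_n -> M) (e : R) (y : 'I_n -> M) : Prop :=
  exists f : 'I_n -> 'I_n, bijective f /\ forall i, d (x i) (y (f i)) < e.

Lemma match_ball_saturated n (x : 'I_n -> M) e : saturated (match_ball x e).
Proof.
move=> y z [g [bg zg]] [f [bf yf]]; exists (g \o f); split; first exact: bij_comp.
by move=> i /=; rewrite zg.
Qed.

Lemma match_ball_center n (x : 'I_n -> M) e : 0 < e -> match_ball x e x.
Proof.
case: hd => _ d_eq0 _ _ e_gt0; exists id; split=> [|i]; first by exists id.
by rewrite (d_eq0 _ _).2.
Qed.

Lemma match_ball_open n (x : 'I_n -> M) e : openA d (match_ball x e).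
Proof.
case: hd => d_ge0 _ _ d_tri y [f [bf yf]].
have [m m_gt0 le_m] := fin_gt0_lbound (fun i => e - d (x i) (y (f i))).
exists m => // z /(G_lt_pointwise d_ge0) [s zs].
exists (s \o f); split=> [|i /=].
  by apply: bij_comp => //; apply/injF_bij/perm_inj.
have := d_tri (x i) (y (f i)) (z (s (f i))); have := zs (f i).
by have := le_m i; rewrite subr_gt0 yf; lra.
Qed.

Lemma G_sqr_match_ball n (x y z : 'I_n -> M) e :
  match_ball x e y -> match_ball x e z -> G d y z ^+ 2 <= (2 * e) ^+ 2 *+ n.
Proof.
case: hd => d_ge0 _ d_sym d_tri [f [[f' ff' f'f] yf]] [g [bg zg]].
have inj_gf' : injective (g \o f') := inj_comp (bij_inj bg) (can_inj f'f).
apply: le_trans (G_sqr_le d y z (perm inj_gf')) _.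
rewrite /sqcost (reindex_inj (can_inj ff')) -[n in _ *+ n]card_ord -sumr_const.
apply: ler_sum => i _; rewrite permE /= ff'.
have := d_tri (y (f i)) (x i) (z (g i)); rewrite [d (y _) (x _)]d_sym.
have := yf i; have := zg i; have := d_ge0 (y (f i)) (z (g i)).
have := d_ge0 (x i) (y (f i)); nra.
Qed.

End MatchBall.

Lemma continuousOn_of_G_le (R : realType) (M : Type) (d : M -> M -> R) n m
    (U : ('I_n -> M) -> Prop) (f : ('I_n -> M) -> ('I_m -> M)) :
  (forall x y, U x -> U y -> G d (f x) (f y) <= G d x y) -> continuousOn d U f.
Proof.
by move=> f_le x Ux e e_gt0; exists e => // y Uy; apply: le_lt_trans (f_le _ _ Ux Uy).
Qed.


Section Cluster.
Variables (R : realType) (M : Type) (d : M -> M -> R).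
Hypothesis hd : is_metric d.
Variables (Q : nat) (P : 'I_Q -> M) (i0 : 'I_Q) (d0 : R).
Hypothesis d0_gt0 : 0 < d0.
Hypothesis P_gap : forall i, P i = P i0 \/ d0 <= d (P i) (P i0).

Local Notation p0 := (P i0).

Definition near_center (m : M) : bool := d m p0 < d0 / 2.
Definition cluster_radius : R := d0 / (4 * (Q%:R + 1)).
Definition cluster_nbhd := match_ball d P cluster_radius.
Definition cluster_size := #|[set i | near_center (P i)]|.
Definition pi_near S : 'I_cluster_size -> M := restrict i0 near_center cluster_size S.
Definition pi_far S : 'I_(Q - cluster_size) -> M :=
  restrict i0 (predC near_center) (Q - cluster_size) S.

Local Notation near := near_center.
Local Notation eps := cluster_radius.
Local Notation U := cluster_nbhd.

Lemma cluster_radiusK : 4 * (Q%:R + 1) * eps = d0.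
Proof.
have Q4_gt0 : 0 < 4 * (Q%:R + 1) :> R by have : 0 <= Q%:R :> R by []; lra.
by rewrite mulrC divfK // gt_eqF.
Qed.

Lemma cluster_radius_gt0 : 0 < eps.
Proof. by rewrite divr_gt0 // mulr_gt0 // ltr_wpDl. Qed.

Lemma cluster_radius_le : 4 * eps <= d0.
Proof.
have := cluster_radiusK; have := cluster_radius_gt0; have : 0 <= Q%:R :> R by [].
nra.
Qed.

Lemma cluster_radius_sqr_lt : (2 * eps) ^+ 2 *+ Q < (d0 / 2) ^+ 2.
Proof.
rewrite -cluster_radiusK -mulr_natr.
have := cluster_radius_gt0; have : 0 <= Q%:R :> R by []; nra.
Qed.

Lemma near_P_close i m : d (P i) m < eps ->
  if near (P i) then d m p0 < eps else d0 - eps < d m p0.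
Proof.
case: hd => d_ge0 d_eq0 d_sym d_tri lt_Pm; have le_eps := cluster_radius_le.
case: (P_gap i) => [Pi | far_i].
  by rewrite /near_center Pi (d_eq0 _ _).2 // divr_gt0 // -Pi d_sym.
have -> : near (P i) = false by apply/negbTE; rewrite -leNgt; have := d0_gt0; lra.
by have := d_tri (P i) m p0; lra.
Qed.

Lemma near_close i m : d (P i) m < eps -> near m = near (P i).
Proof.
move=> /near_P_close; have := cluster_radius_le; have := d0_gt0.
rewrite /near_center; case: ifP => _ d0_pos le_eps lt_m.
  by apply/idP; lra.
by apply/negbTE; rewrite -leNgt; lra.
Qed.

Lemma nbhd_dist S j : U S ->
  if near (S j) then d (S j) p0 < eps else d0 - eps < d (S j) p0.
Proof.
case=> f [[f' _ f'f] Sf]; rewrite -(f'f j).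
by rewrite (near_close (Sf _)); apply: near_P_close.
Qed.

Lemma card_near_nbhd S : U S -> #|[set j | near (S j)]| = cluster_size.
Proof.
case=> f [bf Sf]; rewrite -(card_preimset _ (bij_inj bf)); apply: eq_card => i.
by rewrite !inE (near_close (Sf i)).
Qed.

Lemma card_far_nbhd S : U S -> #|[set j | ~~ near (S j)]| = (Q - cluster_size)%N.
Proof. by move=> US; rewrite card_setC_pred card_near_nbhd. Qed.

Lemma near_far_sep S T i j : U S -> U T -> near (S i) -> ~~ near (T j) ->
  d0 / 2 <= d (S i) (T j).
Proof.
case: hd => _ _ d_sym d_tri US UT near_Si far_Tj.
have := nbhd_dist i US; have := nbhd_dist j UT; rewrite near_Si (negbTE far_Tj) /=.
have := d_tri (T j) (S i) p0; rewrite [d (T j) (S i)]d_sym.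
have := cluster_radius_le; have := d0_gt0; lra.
Qed.

Lemma G_sqr_nbhd_lt S T : U S -> U T -> G d S T ^+ 2 < (d0 / 2) ^+ 2.
Proof.
move=> US UT; apply: le_lt_trans cluster_radius_sqr_lt.
exact: G_sqr_match_ball US UT.
Qed.

Lemma nbhd_decomp S : U S -> eqA S (sumA (pi_near S) (pi_far S)).
Proof. by move/card_near_nbhd/eqA_sumA_restrict; apply. Qed.

Lemma G_sqr_nbhd S T : U S -> U T ->
  G d S T ^+ 2 = G d (pi_near S) (pi_near T) ^+ 2 + G d (pi_far S) (pi_far T) ^+ 2.
Proof.
move=> US UT; have G_ST := G_eqA d (nbhd_decomp US) (nbhd_decomp UT).
rewrite G_ST; apply: (G_sqr_sumA (K := (d0 / 2) ^+ 2)).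
  by rewrite -G_ST; apply: G_sqr_nbhd_lt.
move=> i j; have := d0_gt0.
have := near_far_sep US UT (restrict_pred i0 i (card_near_nbhd US))
  (restrict_pred i0 (c := predC near) j (card_far_nbhd UT)).
nra.
Qed.

Lemma pi_near_wd : wellDefinedOn U pi_near.
Proof. by move=> S T US _ /eqA_restrict; apply; apply: card_near_nbhd. Qed.

Lemma pi_far_wd : wellDefinedOn U pi_far.
Proof.
by move=> S T US _ /(eqA_restrict i0 (c := predC near)); apply; apply: card_far_nbhd.
Qed.

Lemma pi_near_continuous : continuousOn d U pi_near.
Proof.
apply: continuousOn_of_G_le => S T US UT; have := G_sqr_nbhd US UT.
have := G_ge0 d S T; have := G_ge0 d (pi_near S) (pi_near T).
have := sqr_ge0 (G d (pi_far S) (pi_far T)); nra.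
Qed.

Lemma pi_far_continuous : continuousOn d U pi_far.
Proof.
apply: continuousOn_of_G_le => S T US UT; have := G_sqr_nbhd US UT.
have := G_ge0 d S T; have := G_ge0 d (pi_far S) (pi_far T).
have := sqr_ge0 (G d (pi_near S) (pi_near T)); nra.
Qed.

Lemma cluster_size_gt0 : (0 < cluster_size)%N.
Proof.
case: hd => _ d_eq0 _ _; apply/card_gt0P; exists i0.
by rewrite inE /near_center (d_eq0 _ _).2 // divr_gt0.
Qed.

Lemma cluster_size_lt : ~ (forall i, P i = p0) -> (cluster_size < Q)%N.
Proof.
move=> P_nonconst; rewrite -[X in (_ < X)%N](card_ord Q) -cardsT.
apply: proper_card; rewrite properT.
apply/negP => /eqP all_near; apply: P_nonconst => i.
have : i \in [set i | near (P i)] by rewrite all_near inE.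
rewrite inE /near_center => near_i; case: (P_gap i) => // far_i.
have half_lt : d0 / 2 < d0 by have := d0_gt0; lra.
by move: near_i; rewrite ltNge (le_trans (ltW half_lt) far_i).
Qed.

End Cluster.
Arguments pi_near {R M} d {Q} P i0 d0 S _.
Arguments pi_far {R M} d {Q} P i0 d0 S _.


Theorem theorem3p1 (R : realType) (M : Type) (d : M -> M -> R)
  (hd : is_metric d) (Q : nat) (hQ : (2 <= Q)%N) (P : 'I_Q -> M)
  (hP : ~ exists p : M, eqA P (fun _ : 'I_Q => p)) :
  exists (r : nat) (U : ('I_Q -> M) -> Prop)
         (pi1 : ('I_Q -> M) -> ('I_r -> M))
         (pi2 : ('I_Q -> M) -> ('I_(Q - r) -> M)),
    [/\ (0 < r < Q)%N,
        [/\ saturated U, openA d U & U P],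
        [/\ wellDefinedOn U pi1, continuousOn d U pi1,
            wellDefinedOn U pi2 & continuousOn d U pi2],
        (forall S, U S -> eqA S (sumA (pi1 S) (pi2 S))) &
        (forall S T, U S -> U T ->
           G d S T ^+ 2 = G d (pi1 S) (pi1 T) ^+ 2 + G d (pi2 S) (pi2 T) ^+ 2)].
Proof.
pose i0 : 'I_Q := Ordinal (ltn_trans (ltnSn 0) hQ).
have [d0 d0_gt0 P_gap] := fin_metric_gap P (P i0) hd.
have P_nonconst : ~ (forall i, P i = P i0).
  by move=> P_const; apply: hP; exists (P i0); apply: eqA_ext.
exists (cluster_size d P i0 d0), (cluster_nbhd d P d0),
  (pi_near d P i0 d0), (pi_far d P i0 d0); split.
- by rewrite cluster_size_gt0 ?cluster_size_lt.
- split; [exact: match_ball_saturated | exact: match_ball_open |].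
  exact/match_ball_center/cluster_radius_gt0.
- split; [exact: pi_near_wd | exact: pi_near_continuous |
          exact: pi_far_wd | exact: pi_far_continuous].
- by move=> S; apply: nbhd_decomp.
- by move=> S T; apply: G_sqr_nbhd.
Qed.
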